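(* Let $(X,\rho)$ and $(\tilde X,\tilde\rho)$ be symmetric racks (respectively, symmetric quandles) and let $f:(\tilde X,\tilde\rho)\to(X,\rho)$ be a surjective symmetric rack (respectively, quandle) homomorphism. Let $S=\{S_x\mid x\in X\}$ be a family of sets such that for each $x\in X$ there is a bijection $\mu_x:f^{-1}(x)\to S_x$. Then there is a dynamical cocycle $(\alpha,\beta)$ of $(X,\rho)$ over $S$ such that $(\tilde X,\tilde\rho)$ is isomorphic (as a symmetric rack, respectively quandle) to $\big(X\times_{(\alpha,\beta)}S,\rho_{\alpha,\beta}\big)$.
   Context: A rack is a set $X$ with binary operation $*$ such that each $x\mapsto x*y$ is bijective (inverse $x\mapsto x*^{-1}y$) and $(x*y)*z=(x*z)*(y*z)$; a quandle also satisfies $x*x=x$. A good involution is $\rho:X\to X$ with $\rho^2=\mathrm{id}$, $\rho(x*y)=\rho(x)*y$, $x*\rho(y)=x*^{-1}y$; $(X,\rho)$ is a symmetric rack (quandle). A symmetric rack (quandle) homomorphism $f$ satisfies $f(x*y)=f(x)*f(y)$ and $f\rho=\rho' f$; an isomorphism is a bijective one. A dynamical cocycle of $(X,\rho)$ over $S=\{S_x\}$ consists of maps $\alpha_{x,y}:S_x\times S_y\to S_{x*y}$ and $\beta_x:S_x\to S_{\rho(x)}$ such that for all $x,y,z\in X$, $s\in S_x,t\in S_y,w\in S_z$ (with $\alpha_{x,y}(t)(s):=\alpha_{x,y}(s,t)$): (1) $\alpha_{x,y}(t):S_x\to S_{x*y}$ is bijective; (2) $\alpha_{x*y,z}(\alpha_{x,y}(s,t),w)=\alpha_{x*z,y*z}(\alpha_{x,z}(s,w),\alpha_{y,z}(t,w))$;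 (3) $\alpha_{\rho(x),y}(\beta_x(s),t)=\beta_{x*y}(\alpha_{x,y}(s,t))$; (4) $\beta_{\rho(x)}\beta_x(s)=s$; (5) $\alpha_{x,\rho(y)}(\beta_y(t))(s)=(\alpha_{x*^{-1}y,y}(t))^{-1}(s)$; for symmetric quandles also (6) $\alpha_{x,x}(s,s)=s$. The extension $\big(X\times_{(\alpha,\beta)}S,\rho_{\alpha,\beta}\big)$ is the set $\{(x,s)\mid x\in X,s\in S_x\}$ with $(x,s)*(y,t)=(x*y,\alpha_{x,y}(s,t))$ and $\rho_{\alpha,\beta}(x,s)=(\rho(x),\beta_x(s))$, which is a symmetric rack (quandle). *)

From mathcomp Require Export ssreflect ssrfun.
Set Implicit Arguments.
Unset Strict Implicit.

(* A rack (X, op) presented with its inverse operation opinv: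
   x |-> op x y is bijective with inverse x |-> opinv x y,
   and right self-distributivity holds. *)
Definition is_rack (X : Type) (op opinv : X -> X -> X) : Prop :=
  (forall x y, op (opinv x y) y = x) /\
  (forall x y, opinv (op x y) y = x) /\
  (forall x y z, op (op x y) z = op (op x z) (op y z)).

Definition is_quandle (X : Type) (op : X -> X -> X) : Prop :=
  forall x, op x x = x.

Definition good_involution (X : Type) (op opinv : X -> X -> X) (rho : X -> X) : Prop :=
  (forall x, rho (rho x) = x) /\
  (forall x y, rho (op x y) = op (rho x) y) /\
  (forall x y, op x (rho y) = opinv x y).

Definition is_symrack (q : bool) (X : Type) (op opinv : X -> X -> X) (rho : X -> X) : Prop :=
  is_rack op opinv /\ good_involution op opinv rho /\ (q = true -> is_quandle op).

Definition sym_hom (Xt X : Type) (opt : Xt -> Xt -> Xt) (rhot : Xt -> Xt)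
  (op : X -> X -> X) (rho : X -> X) (f : Xt -> X) : Prop :=
  (forall a b, f (opt a b) = op (f a) (f b)) /\ (forall a, f (rhot a) = rho (f a)).

Definition sym_iso (Xt X : Type) (opt : Xt -> Xt -> Xt) (rhot : Xt -> Xt)
  (op : X -> X -> X) (rho : X -> X) (f : Xt -> X) : Prop :=
  sym_hom opt rhot op rho f /\ bijective f.

(* Dynamical cocycle.  Equalities between elements of fibres S a and S b
   with a = b only propositionally are stated as equalities of dependent
   pairs in {x : X & S x} (heterogeneous equality). *)
Definition dyn_cocycle (q : bool) (X : Type) (op opinv : X -> X -> X) (rho : X -> X)
  (S : X -> Type) (alpha : forall x y, S x -> S y -> S (op x y))
  (beta : forall x, S x -> S (rho x)) : Prop :=
  (forall x y (t : S y), bijective (fun s : S x => alpha x y s t)) /\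
  (forall x y z (s : S x) (t : S y) (w : S z),
      existT S (op (op x y) z) (alpha _ _ (alpha x y s t) w)
      = existT S (op (op x z) (op y z)) (alpha _ _ (alpha x z s w) (alpha y z t w))) /\
  (forall x y (s : S x) (t : S y),
      existT S (op (rho x) y) (alpha _ _ (beta x s) t)
      = existT S (rho (op x y)) (beta _ (alpha x y s t))) /\
  (forall x (s : S x), existT S (rho (rho x)) (beta _ (beta x s)) = existT S x s) /\
  (* (5): alpha_{x,rho y}(beta_y t)(s) equals (alpha_{x*^{-1}y,y}(t))^{-1}(s),
     i.e. equals the element u of S_{x*^{-1}y} mapped to s by alpha_{x*^{-1}y,y}(t). *)
  (forall x y (s : S x) (t : S y) (u : S (opinv x y)),
      existT S (op (opinv x y) y) (alpha _ _ u t) = existT S x s ->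
      existT S (op x (rho y)) (alpha x (rho y) s (beta y t)) = existT S (opinv x y) u) /\
  (q = true -> forall x (s : S x), existT S (op x x) (alpha x x s s) = existT S x s).

Definition ext_op (X : Type) (op : X -> X -> X) (S : X -> Type)
  (alpha : forall x y, S x -> S y -> S (op x y))
  (a b : {x : X & S x}) : {x : X & S x} :=
  existT S (op (projT1 a) (projT1 b)) (alpha _ _ (projT2 a) (projT2 b)).

Definition ext_rho (X : Type) (rho : X -> X) (S : X -> Type)
  (beta : forall x, S x -> S (rho x)) (a : {x : X & S x}) : {x : X & S x} :=
  existT S (rho (projT1 a)) (beta _ (projT2 a)).

From Stdlib Require Import Eqdep IndefiniteDescription.

(* The bijections mu_x assemble into a bijection between the total space
   {x : X & S x} and Xt lying over X.  Transporting the operation and the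
   involution of Xt along it gives alpha and beta; the extension is then
   isomorphic to Xt by construction, and each cocycle axiom is a symmetric
   rack (quandle) axiom of Xt read through the bijection. *)

Set Implicit Arguments.
Unset Strict Implicit.
Unset Printing Implicit Defensive.

Lemma bijective_sig (A B : Type) (g : A -> B) :
  bijective g -> {h : B -> A | cancel g h /\ cancel h g}.
Proof.
move=> g_bij; apply: constructive_indefinite_description.
by case: g_bij => h gK hK; exists h.
Qed.

Section FibreCoordinates.

Variables (Xt X : Type) (f : Xt -> X) (S : X -> Type).
Variables (mu : forall x, {a : Xt | f a = x} -> S x)
          (nu : forall x, S x -> {a : Xt | f a = x}).
Hypotheses (muK : forall x, cancel (@mu x) (@nu x))
           (nuK : forall x, cancel (@nu x) (@mu x)).

Definition point (u : {x : X & S x}) : Xt := sval (nu (projT2 u)).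

Definition coord (a : Xt) : {x : X & S x} := existT S (f a) (mu (exist _ a erefl)).

Lemma f_point u : f (point u) = projT1 u.
Proof. exact: (svalP (nu (projT2 u))). Qed.

Lemma point_mu x a (e : f a = x) : point (existT S x (mu (exist _ a e))) = a.
Proof. by rewrite /point /= muK. Qed.

Lemma coordK : cancel coord point.
Proof. by move=> a; apply: point_mu. Qed.

Lemma pointK : cancel point coord.
Proof.
case=> x s; rewrite /point /= -[s in RHS]nuK.
by case: (nu s) => a e; subst x.
Qed.

Lemma point_inj : injective point.
Proof. exact: can_inj pointK. Qed.

Lemma point_fibre_inj x : injective (fun s : S x => point (existT S x s)).
Proof. by move=> s s' /point_inj E; apply: inj_pairT2 E. Qed.

End FibreCoordinates.

Section TransportedCocycle.

Variables (q : bool) (X Xt : Type).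
Variables (op opinv : X -> X -> X) (rho : X -> X).
Variables (opt opinvt : Xt -> Xt -> Xt) (rhot : Xt -> Xt).
Variables (f : Xt -> X) (S : X -> Type).
Variables (mu : forall x, {a : Xt | f a = x} -> S x)
          (nu : forall x, S x -> {a : Xt | f a = x}).
Hypotheses (muK : forall x, cancel (@mu x) (@nu x))
           (nuK : forall x, cancel (@nu x) (@mu x)).
Hypothesis opK : forall x y, opinv (op x y) y = x.
Hypothesis Xt_sym : is_symrack q opt opinvt rhot.
Hypothesis f_hom : sym_hom opt rhot op rho f.

Local Notation point := (point nu).
Local Notation coord := (coord mu).

Lemma f_opinvt a b : f (opinvt a b) = opinv (f a) (f b).
Proof.
case: Xt_sym f_hom => [[opinvtK _] _] [f_op _].
by rewrite -{2}(opinvtK a b) f_op opK.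
Qed.

Lemma f_opt_point u v : f (opt (point u) (point v)) = op (projT1 u) (projT1 v).
Proof. by case: f_hom => f_op _; rewrite f_op !f_point. Qed.

Lemma f_rhot_point u : f (rhot (point u)) = rho (projT1 u).
Proof. by case: f_hom => _ f_rho; rewrite f_rho f_point. Qed.

Definition transport_alpha x y (s : S x) (t : S y) : S (op x y) :=
  mu (exist _ _ (f_opt_point (existT S x s) (existT S y t))).

Definition transport_beta x (s : S x) : S (rho x) :=
  mu (exist _ _ (f_rhot_point (existT S x s))).

Local Notation alpha := transport_alpha.
Local Notation beta := transport_beta.

Lemma point_alpha x y (s : S x) (t : S y) :
  point (existT S (op x y) (alpha s t))
  = opt (point (existT S x s)) (point (existT S y t)).
Proof. exact: (point_mu muK). Qed.

Lemma point_beta x (s : S x) :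
  point (existT S (rho x) (beta s)) = rhot (point (existT S x s)).
Proof. exact: (point_mu muK). Qed.

Lemma point_ext_op u v : point (ext_op alpha u v) = opt (point u) (point v).
Proof. by case: u v => [x s] [y t]; apply: point_alpha. Qed.

Lemma point_ext_rho u : point (ext_rho beta u) = rhot (point u).
Proof. by case: u => x s; apply: point_beta. Qed.

Lemma transport_alpha_bij x y (t : S y) : bijective (fun s : S x => alpha s t).
Proof.
case: Xt_sym => [[opinvtK [optK _]] _].
have f_div s' : f (opinvt (point (existT S (op x y) s')) (point (existT S y t))) = x.
  by rewrite f_opinvt !f_point opK.
exists (fun s' => mu (exist _ _ (f_div s'))) => [s | s'];
  apply: (point_fibre_inj nuK).
- by rewrite (point_mu muK) point_alpha optK.
- by rewrite point_alpha (point_mu muK) opinvtK.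
Qed.

Lemma transport_cocycle : @dyn_cocycle q X op opinv rho S alpha beta.
Proof.
have point_inj := point_inj nuK.
case: Xt_sym => [[opinvtK [optK opt_dist]] [[rhotK [rhot_opt opt_rhot]] opt_idem]].
split; first exact: transport_alpha_bij.
split; first by move=> x y z s t w; apply: point_inj; rewrite !point_alpha opt_dist.
split; first by move=> x y s t; apply: point_inj;
  rewrite point_alpha !point_beta point_alpha rhot_opt.
split; first by move=> x s; apply: point_inj; rewrite !point_beta rhotK.
split.
  move=> x y s t u /(congr1 point); rewrite point_alpha => E.
  by apply: point_inj; rewrite point_alpha point_beta opt_rhot -E optK.
by move=> /opt_idem idem x s; apply: point_inj; rewrite point_alpha idem.
Qed.

Lemma coord_sym_iso : sym_iso opt rhot (ext_op alpha) (ext_rho beta) coord.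
Proof.
have point_inj := point_inj nuK.
split; [split | exists point].
- by move=> a b; apply: point_inj; rewrite point_ext_op !coordK.
- by move=> a; apply: point_inj; rewrite point_ext_rho !coordK.
- exact: coordK.
- exact: pointK.
Qed.

End TransportedCocycle.

Theorem proposition5p1 (q : bool)
  (X : Type) (op opinv : X -> X -> X) (rho : X -> X)
  (Xt : Type) (opt opinvt : Xt -> Xt -> Xt) (rhot : Xt -> Xt)
  (f : Xt -> X) (S : X -> Type) (mu : forall x, {a : Xt | f a = x} -> S x) :
  is_symrack q op opinv rho ->
  is_symrack q opt opinvt rhot ->
  sym_hom opt rhot op rho f ->
  (forall x, exists a, f a = x) ->
  (forall x, bijective (mu x)) ->
  exists (alpha : forall x y, S x -> S y -> S (op x y))
         (beta : forall x, S x -> S (rho x)),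
    @dyn_cocycle q X op opinv rho S alpha beta /\
    exists g : Xt -> {x : X & S x},
      sym_iso opt rhot (@ext_op X op S alpha) (@ext_rho X rho S beta) g.
Proof.
move=> [[_ [opK _]] _] Xt_sym f_hom _ mu_bij.
pose nu x := sval (bijective_sig (mu_bij x)).
have muK x : cancel (mu x) (nu x) by case: (svalP (bijective_sig (mu_bij x))).
have nuK x : cancel (nu x) (mu x) by case: (svalP (bijective_sig (mu_bij x))).
exists (transport_alpha mu nu f_hom), (transport_beta mu nu f_hom); split.
- exact: (transport_cocycle muK nuK opK Xt_sym).
- by exists (coord mu); apply: (coord_sym_iso muK nuK).
Qed.
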